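(* Suppose $0<\eta<\omega_1$ and $\mathcal{F}_1,\mathcal{F}_2,\dots$ are regular families containing all singletons with $CB(\mathcal{F}_j)<\omega^\eta$ for each $j$. Fix a sequence of positive numbers $(\varpi_n)_{n=1}^\infty$ converging to $0$. Let $Z_0$ be the completion of $c_{00}$ with respect to the norm $[x]_0=\sup\{\varpi_j\|Ex\|_{\ell_1}:j\in\mathbb{N},E\in\mathcal{F}_j\}$. Then the canonical basis of $Z_0$ is $\eta$-weakly null.
   Context: For $E\subset\mathbb{N}$ and $x=\sum a_ne_n\in c_{00}$, $Ex=\sum_{n\in E}a_ne_n$. A family $\mathcal{F}$ of finite subsets of $\mathbb{N}$ is regular if it is hereditary (closed under subsets), spreading (if $(m_i)_{i=1}^k\in\mathcal{F}$ in increasing order and $n_1<\dots<n_k$ with $m_i\leqslant n_i$, then $(n_i)_{i=1}^k\in\mathcal{F}$) and compact in $2^{\mathbb{N}}\cong\{0,1\}^{\mathbb{N}}$. $CB(\mathcal{F})$ is the Cantor–Bendixson index: $\mathcal{F}'$ removes maximal members, iterate transfinitely (intersections at limits), $CB(\mathcal{F})$ is the least $\xi$ with $\mathcal{F}^\xi=\varnothing$. Schreier families: $\mathcal{S}_0=\{\varnothing\}\cup\{\{n\}\}$; $\mathcal{S}=\{\varnothing\}\cup\{E:|E|\leqslant\min E\}$; $\mathcal{G}[\mathcal{F}]=\{\varnothing\}\cup\{\bigcup_{i=1}^nE_i:\varnothing\neq E_i\in\mathcal{F},\max E_i<\min E_{i+1},(\min E_i)\in\mathcal{G}\}$; $\mathcal{S}_{\xi+1}=\mathcal{S}[\mathcal{S}_\xi]$;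 for limit $\xi$, with fixed $\xi_n\uparrow\xi$, $\mathcal{S}_{\xi_n+1}\subset\mathcal{S}_{\xi_{n+1}}$, $\mathcal{S}_\xi=\{\varnothing\}\cup\{E\neq\varnothing:E\in\mathcal{S}_{\xi_{\min E}+1}\}$. For $\xi<\omega_1$, a bounded sequence $(x_n)$ is an $\ell_1^\xi+$-spreading model if $\inf\{\|x\|:F\in\mathcal{S}_\xi,x\in\mathrm{co}(x_n:n\in F)\}>0$; it is $\xi$-weakly null if no subsequence is an $\ell_1^\xi+$-spreading model. *)

From HB Require Import structures.
From mathcomp Require Import all_boot all_order all_algebra.
From mathcomp Require Import all_classical all_reals all_analysis.
Set Implicit Arguments. Unset Strict Implicit. Unset Printing Implicit Defensive.
Import Order.TTheory GRing.Theory Num.Theory.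
Local Open Scope ring_scope.
Local Open Scope classical_set_scope.

(* Countable ordinals as Brouwer trees (every tree denotes a countable
   ordinal and every countable ordinal is denoted by some tree);
   OL f denotes sup_n (f n).                                          *)
Inductive ord : Type :=
| OZ : ord
| OS : ord -> ord
| OL : (nat -> ord) -> ord.

(* The (exact) order on the denoted ordinals. *)
Inductive ord_le : ord -> ord -> Prop :=
| ord_leZ : forall b, ord_le OZ b
| ord_leSS : forall a b, ord_le a b -> ord_le (OS a) (OS b)
| ord_leSr : forall a b, ord_le a b -> ord_le a (OS b)
| ord_leLl : forall f b, (forall n, ord_le (f n) b) -> ord_le (OL f) b
| ord_leLr : forall a f n, ord_le a (f n) -> ord_le a (OL f).

Definition ord_lt (a b : ord) : Prop := ord_le (OS a) b.
Definition ord_eq (a b : ord) : Prop := ord_le a b /\ ord_le b a.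
Definition ord_is_limit (a : ord) : Prop :=
  ~ ord_eq a OZ /\ forall b, ~ ord_eq a (OS b).

Fixpoint ord_add (a b : ord) : ord :=
  match b with
  | OZ => a
  | OS b' => OS (ord_add a b')
  | OL f => OL (fun n => ord_add a (f n))
  end.

Fixpoint ord_mul (a b : ord) : ord :=
  match b with
  | OZ => OZ
  | OS b' => ord_add (ord_mul a b') a
  | OL f => OL (fun n => ord_mul a (f n))
  end.

Fixpoint ord_exp (a b : ord) : ord :=
  match b with
  | OZ => OS OZ
  | OS b' => ord_mul (ord_exp a b') a
  | OL f => OL (fun n => ord_exp a (f n))
  end.

Fixpoint ord_of_nat (n : nat) : ord :=
  match n with O => OZ | S k => OS (ord_of_nat k) end.

Definition ord_omega : ord := OL ord_of_nat.

(* CONVENTION: the paper's N = {1,2,...}; the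
   natural number k : nat stands for the paper's k+1.  A finite subset
   is represented by its strictly increasing enumeration (seq nat).   *)
Definition is_set (E : seq nat) : Prop := sorted ltn E.

Definition family := seq nat -> Prop.

Definition hereditary (F : family) : Prop :=
  forall E G, F E -> is_set G -> subseq G E -> F G.

Definition spreading (F : family) : Prop :=
  forall E G, F E -> is_set G -> size G = size E ->
    (forall i, (i < size E)%N -> (nth 0 E i <= nth 0 G i)%N) -> F G.

(* compact (equivalently closed) in 2^N = {0,1}^N with the product
   topology, identifying a set with its indicator function. *)
Definition compact_family (F : family) : Prop :=
  forall x : nat -> bool,
    (forall n, exists E, F E /\ forall i, (i < n)%N -> (i \in E) = x i) ->
    exists E, F E /\ forall i, (i \in E) = x i.

Definition regular (F : family) : Prop :=
  [/\ forall E, F E -> is_set E, hereditary F, spreading F & compact_family F].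

Definition derived (F : family) : family :=
  fun E => F E /\ exists G, F G /\ subseq E G /\ E <> G.

Fixpoint CB_deriv (F : family) (a : ord) : family :=
  match a with
  | OZ => F
  | OS b => derived (CB_deriv F b)
  | OL f => fun E => forall n, CB_deriv F (f n) E
  end.

(* CB(F) < a  iff  F^b = empty for some b < a  (CB(F) is the least such b) *)
Definition CB_lt (F : family) (a : ord) : Prop :=
  exists b, ord_lt b a /\ forall E, ~ CB_deriv F b E.

Definition S0 : family := fun E => is_set E /\ (size E <= 1)%N.

(* S = {empty} u {E : |E| <= min E}; min E is (head 0 E) + 1 in the paper *)
Definition Schreier : family :=
  fun E => is_set E /\ (E = [::] \/ (size E <= (head 0 E).+1)%N).

Definition comb (G F : family) : family :=
  fun E => E = [::] \/
    (is_set E /\ exists Es : seq (seq nat),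
       [/\ Es <> [::], E = flatten Es,
           (forall A, A \in Es -> A <> [::] /\ F A),
           (forall i, (i.+1 < size Es)%N ->
              (last 0 (nth [::] Es i) < head 0 (nth [::] Es i.+1))%N)
         & G (map (head 0) Es)]).

(* (sq, S) is a system of Schreier families S_xi, xi < omega_1, built with
   the choice of sequences sq xi n  (n : nat stands for paper's n+1)
   increasing to xi at limit ordinals xi. *)
Definition Schreier_system (sq : ord -> nat -> ord) (S : ord -> family) : Prop :=
  [/\ (forall a b, ord_eq a b -> forall E, S a E <-> S b E),
      (forall E, S OZ E <-> S0 E),
      (forall a E, S (OS a) E <-> comb Schreier (S a) E)
    & (forall a, ord_is_limit a ->
        [/\ forall n, ord_lt (sq a n) (sq a n.+1),
            ord_eq (OL (sq a)) a,
            (forall n E, S (OS (sq a n)) E -> S (sq a n.+1) E)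
          & forall E, S a E <-> (E = [::] \/ (E <> [::] /\ S (OS (sq a (head 0 E))) E))])].

(* Vectors of c00 as functions nat -> R (finitely supported ones).    *)
Section Vectors.
Variable R : realType.

Definition basis_vec (n : nat) : nat -> R := fun i => if i == n then 1 else 0.

Definition Z0norm (w : nat -> R) (Fs : nat -> family) (x : nat -> R) : R :=
  sup [set r | exists j E, Fs j E /\ r = w j * \sum_(i <- E) `|x i|].

Definition co (xs : nat -> nat -> R) (F : seq nat) : set (nat -> R) :=
  [set y | exists a : nat -> R,
     [/\ forall k, k \in F -> 0 <= a k, \sum_(k <- F) a k = 1
       & y = fun i => \sum_(k <- F) a k * xs k i]].

Definition bounded_seq (nrm : (nat -> R) -> R) (xs : nat -> nat -> R) : Prop :=
  exists M, forall n, nrm (xs n) <= M.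

Definition l1_spreading_model (nrm : (nat -> R) -> R) (xs : nat -> nat -> R)
  (Sxi : family) : Prop :=
  0 < inf [set r | exists F y, [/\ Sxi F, co xs F y & r = nrm y]].

Definition weakly_null_wrt (nrm : (nat -> R) -> R) (xs : nat -> nat -> R)
  (Sxi : family) : Prop :=
  bounded_seq nrm xs /\
  forall m : nat -> nat, (forall k, (m k < m k.+1)%N) ->
    ~ l1_spreading_model nrm (fun k => xs (m k)) Sxi.

End Vectors.

From HB Require Import structures.
From mathcomp Require Import all_boot all_order all_algebra.
From mathcomp Require Import all_classical all_reals all_analysis.
From mathcomp Require Import lra.
Import Order.TTheory GRing.Theory Num.Theory numFieldNormedType.Exports.
Set Implicit Arguments. Unset Strict Implicit. Unset Printing Implicit Defensive.
Local Open Scope ring_scope.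

(* The norm [Z0norm] of a convex combination of basis vectors with weights
   [mu] is the supremum of [w j * mu(E)] over [E] in [Fs j].  Since [w j -> 0],
   only finitely many [Fs j] matter, so it suffices to show: for finitely many
   hereditary families [G] with [CB(G) <= omega^eta] there are probability
   measures on [S eta]-sets, arbitrarily far out, giving mass at most [delta]
   to every member of every [G] (applied to the [Fs j] pulled back along a
   subsequence).  This is proved by induction on [eta].  At a limit, the
   measure for some [eta_n] works since [S eta_n] is eventually contained in
   [S eta].  At [eta = z + 1] the layers [G^(omega^z k)] of [G] become empty
   at some [K]; one averages [N >= 2K/delta] successive blocks, each obtained
   at [z] so as to be small on all extensions beyond its start of the initial
   segments lying in some layer [k] but not in layer [k + 1].  For [E] in [G],
   each heavy block pushes the initial segment of [E] one layer down, so at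
   most [K] blocks are heavy and the average gives [E] mass at most
   [K/N + delta/2]. *)

(** * Countable ordinals *)

Lemma ord_le_refl a : ord_le a a.
Proof.
elim: a => [|a IH|f IH]; [exact: ord_leZ | exact: ord_leSS |].
by apply: ord_leLl => n; apply: ord_leLr (IH n).
Qed.

Lemma ord_leSl a b : ord_le (OS a) b -> ord_le a b.
Proof.
elim: b => [|b IH|f IH] H; inversion H; subst.
- exact: ord_leSr.
- by apply: ord_leSr; apply: IH.
- by apply: ord_leLr; apply: IH; eassumption.
Qed.

Lemma ord_leLl_inv f b : ord_le (OL f) b -> forall n, ord_le (f n) b.
Proof.
elim: b => [|b IH|g IH] H n; inversion H; subst; auto.
- by apply: ord_leSr; apply: IH.
- by apply: ord_leLr; apply: IH; eassumption.
Qed.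

Lemma ord_le_trans a b c : ord_le a b -> ord_le b c -> ord_le a c.
Proof.
move=> H; elim: H c => {a b}.
- by move=> b c _; apply: ord_leZ.
- move=> a b _ IH c; elim: c => [|c IHc|g IHg] H; inversion H; subst.
  + by apply: ord_leSS; apply: IH.
  + by apply: ord_leSr; apply: IHc.
  + by apply: ord_leLr; apply: IHg; eassumption.
- by move=> a b _ IH c /ord_leSl; apply: IH.
- by move=> f b _ IH c H; apply: ord_leLl => n; apply: IH.
- by move=> a f n _ IH c /ord_leLl_inv/(_ n); apply: IH.
Qed.

Lemma ord_ltW a b : ord_lt a b -> ord_le a b.
Proof. exact: ord_leSl. Qed.

Lemma ord_lt_le_trans a b c : ord_lt a b -> ord_le b c -> ord_lt a c.
Proof. exact: ord_le_trans. Qed.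

Lemma ord_le_lt_trans a b c : ord_le a b -> ord_lt b c -> ord_lt a c.
Proof. by move=> ab; apply: ord_le_trans; apply: ord_leSS. Qed.

Lemma ord_lt_trans a b c : ord_lt a b -> ord_lt b c -> ord_lt a c.
Proof. by move=> ab /ord_ltW; apply: ord_lt_le_trans. Qed.

Lemma ord_lt0 a : ~ ord_lt a OZ.
Proof. by move=> H; inversion H. Qed.

Lemma ord_leS2 a b : ord_le (OS a) (OS b) -> ord_le a b.
Proof. by move=> H; inversion H; subst => //; apply: ord_leSl. Qed.

Lemma ord_ltLr a f : ord_lt a (OL f) -> exists n, ord_lt a (f n).
Proof. by move=> H; inversion H; subst; exists n. Qed.

Lemma ord_lt_wf : well_founded ord_lt.
Proof.
suff acc t s : ord_le s t -> Acc ord_lt s by move=> a; apply: (acc a); apply: ord_le_refl.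
elim: t s => [|t IH|g IH] s st; constructor => u us; have := ord_le_trans us st.
- by move=> H; inversion H.
- by move/ord_leS2; apply: IH.
- by move=> H; inversion H; subst; apply: (IH n); apply: ord_leSl.
Qed.

Lemma ord_le_ext a b : (forall c, ord_lt c a -> ord_lt c b) -> ord_le a b.
Proof.
elim: a b => [|a IH|f IH] b H.
- exact: ord_leZ.
- by apply: H; apply: ord_le_refl.
- by apply: ord_leLl => n; apply: IH => c cf; apply: H; apply: ord_leLr cf.
Qed.

Lemma ord_leVgt a b : ord_le a b \/ ord_lt b a.
Proof.
elim/(well_founded_ind ord_lt_wf): a b => a IHa b.
elim/(well_founded_ind ord_lt_wf): b => b IHb.
have [|nba] := EM (ord_lt b a); first by right.
left; apply: ord_le_ext => c ca.
have [cb|bc] := IHa c ca b; last by case: nba; apply: ord_lt_trans bc ca.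
have [//|ncb] := EM (ord_lt c b).
suff bc : ord_le b c by case: nba; apply: ord_le_lt_trans bc ca.
apply: ord_le_ext => d db.
have [ad|//] := IHb d db; first by case: ncb; apply: ord_lt_trans ca (ord_le_lt_trans ad db).
by have [cd|//] := IHa c ca d; case: ncb; apply: ord_le_lt_trans cd db.
Qed.

Lemma ord_zero_succ_or_limit b :
  ord_eq b OZ \/ (exists c, ord_eq b (OS c)) \/ ord_is_limit b.
Proof.
have [|b0] := EM (ord_eq b OZ); first by left.
have [|bS] := EM (exists c, ord_eq b (OS c)); first by right; left.
by right; right; split => // c bc; apply: bS; exists c.
Qed.

Lemma ord_le_addr a c : ord_le a (ord_add a c).
Proof.
elim: c => [|c IH|f IH] /=; [exact: ord_le_refl | exact: ord_leSr | exact: ord_leLr (IH 0)].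
Qed.

Lemma ord_le_addl a c : ord_le c (ord_add a c).
Proof.
elim: c => [|c IH|f IH] /=; [exact: ord_leZ | exact: ord_leSS |].
by apply: ord_leLl => n; apply: ord_leLr (IH n).
Qed.

Lemma ord_add_monor a b c : ord_le b c -> ord_le (ord_add a b) (ord_add a c).
Proof.
elim=> {b c} /= [b|b c _|b c _|f b _|b f n _]; last 4 first.
- exact: ord_leSS.
- exact: ord_leSr.
- exact: ord_leLl.
- exact: ord_leLr.
exact: ord_le_addr.
Qed.

Lemma ord_add_monol a b c : ord_le a b -> ord_le (ord_add a c) (ord_add b c).
Proof.
move=> ab; elim: c => [|c IH|f IH] //=; first exact: ord_leSS.
by apply: ord_leLl => n; apply: ord_leLr (IH n).
Qed.

Lemma ord_mul_monor a b c : ord_le b c -> ord_le (ord_mul a b) (ord_mul a c).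
Proof.
elim=> {b c} /= [b|b c _ IH|b c _ IH|f b _|b f n _]; last 2 first.
- exact: ord_leLl.
- exact: ord_leLr.
- exact: ord_leZ.
- exact: ord_add_monol.
- exact: ord_le_trans IH (ord_le_addr _ _).
Qed.

Lemma ord_mul_monol a b c : ord_le a b -> ord_le (ord_mul a c) (ord_mul b c).
Proof.
move=> ab; elim: c => [|c IH|f IH] /=; first exact: ord_leZ.
- exact: ord_le_trans (ord_add_monol _ IH) (ord_add_monor _ ab).
- by apply: ord_leLl => n; apply: ord_leLr (IH n).
Qed.

Lemma ord_le_mulr a b : ord_le (OS OZ) b -> ord_le a (ord_mul a b).
Proof. by move=> b1; apply: ord_le_trans (ord_mul_monor a b1); apply: ord_le_addl. Qed.

Lemma ord_exp_ge1 a b : ord_le (OS OZ) a -> ord_le (OS OZ) (ord_exp a b).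
Proof.
move=> a1; elim: b => [|b IH|f IH] /=; first exact: ord_le_refl.
- exact: ord_le_trans IH (ord_le_mulr _ a1).
- exact: ord_leLr (IH 0).
Qed.

Lemma ord_exp_monor a b c :
  ord_le (OS OZ) a -> ord_le b c -> ord_le (ord_exp a b) (ord_exp a c).
Proof.
move=> a1; elim=> {b c} /= [c|b c _ IH|b c _ IH|f b _|b f n _]; last 2 first.
- exact: ord_leLl.
- exact: ord_leLr.
- exact: ord_exp_ge1.
- exact: ord_mul_monol.
- exact: ord_le_trans IH (ord_le_mulr _ a1).
Qed.

Lemma ord_omega_ge1 : ord_le (OS OZ) ord_omega.
Proof. exact: (@ord_leLr _ _ 1) (ord_le_refl _). Qed.

Lemma ord_of_nat_le m n : (m <= n)%N -> ord_le (ord_of_nat m) (ord_of_nat n).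
Proof.
elim: n m => [|n IH] [|m] //= mn; [exact: ord_leZ | exact: ord_leZ | exact: ord_leSS (IH m mn)].
Qed.

(** * Cantor--Bendixson derivatives *)

Definition hered_family (F : family) : Prop :=
  (forall E, F E -> is_set E) /\ hereditary F.

Lemma hered_family_nil F E : hered_family F -> F E -> F [::].
Proof. by case=> _ Fher FE; apply: Fher FE _ (sub0seq E). Qed.

Lemma hered_family_prefix F P Q : hered_family F -> F (P ++ Q) -> F P.
Proof.
case=> Fset Fher FPQ; apply: (Fher _ _ FPQ _ (prefix_subseq P Q)).
exact: (cat_sorted2 (Fset _ FPQ)).1.
Qed.

Lemma CB_deriv_sub F a E : CB_deriv F a E -> F E.
Proof. by elim: a E => [|a IH|f IH] E //= => [[/IH]|/(_ 0)/IH]. Qed.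

Lemma derived_sub (X Y : family) E :
  (forall E, X E -> Y E) -> derived X E -> derived Y E.
Proof. by move=> XY [XE [G [XG GE]]]; split; [apply: XY | exists G; split; [apply: XY|]]. Qed.

Lemma CB_deriv_antitone F a b E : ord_le a b -> CB_deriv F b E -> CB_deriv F a E.
Proof.
move=> ab; elim: ab E => {a b} /=.
- by move=> b E; apply: CB_deriv_sub.
- by move=> a b _ IH E; apply: derived_sub.
- by move=> a b _ IH E [/IH].
- by move=> f b _ IH E Eb n; apply: IH.
- by move=> a f n _ IH E /(_ n)/IH.
Qed.

Lemma CB_deriv_add F a b : CB_deriv F (ord_add a b) = CB_deriv (CB_deriv F a) b.
Proof.
elim: b => [|b IH|f IH] //=; first by rewrite IH.
by apply/funext => E; apply/propext; split => H n; [rewrite -IH | rewrite IH].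
Qed.

Lemma hered_family_derived F : hered_family F -> hered_family (derived F).
Proof.
case=> Fset Fher; split=> [E [/Fset]//|E E' [FE [G [FG [EG EneG]]]] E'set E'E].
split; first exact: Fher FE E'set E'E.
exists G; split=> //; split; first exact: subseq_trans E'E EG.
move=> E'G; subst E'; apply: EneG; apply/eqP.
by rewrite eq_sym -(size_subseq_leqif E'E).2 eqn_leq !size_subseq.
Qed.

Lemma hered_family_CB_deriv F a : hered_family F -> hered_family (CB_deriv F a).
Proof.
elim: a => [|a IH|f IH] //= Fh; first exact/hered_family_derived/IH.
split=> [E /(_ 0) /(proj1 (IH 0 Fh))//|E E' EF E'set E'E n].
exact: (proj2 (IH n Fh)) (EF n) E'set E'E.
Qed.

Lemma CB_deriv_empty F a :
  hered_family F -> ~ CB_deriv F a [::] -> forall E, ~ CB_deriv F a E.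
Proof. by move=> Fh nil0 E /(hered_family_nil (hered_family_CB_deriv a Fh)). Qed.

Lemma CB_deriv_OL_empty F f : hered_family F ->
  (forall E, ~ CB_deriv F (OL f) E) -> exists n, forall E, ~ CB_deriv F (f n) E.
Proof.
move=> Fh empty; have [[n nil_n]|] := EM (exists n, ~ CB_deriv F (f n) [::]).
  by exists n; apply: CB_deriv_empty.
move=> nil_all; case: (empty [::]) => n.
by have [//|nil_n] := EM (CB_deriv F (f n) [::]); case: nil_all; exists n.
Qed.

Definition pullback (m : nat -> nat) (F : family) : family :=
  fun K => is_set K /\ F (map m K).

Lemma hered_family_pullback m F :
  {homo m : i j / (i < j)%N} -> hereditary F -> hered_family (pullback m F).
Proof.
move=> m_lt Fher; split=> [K []//|K K' [_ FK] K'set K'K]; split=> //.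
apply: Fher FK _ (map_subseq m K'K).
by rewrite /is_set sorted_map; apply: sub_sorted K'set => i j /m_lt.
Qed.

Lemma CB_deriv_pullback m F a K :
  injective m -> CB_deriv (pullback m F) a K -> CB_deriv F a (map m K).
Proof.
move=> m_inj; elim: a K => [|a IH|f IH] K /=; [by case | | by move=> HK n; apply: IH].
move=> [/IH FK [K' [/IH FK' [KK' KneK']]]]; split=> //; exists (map m K'); split=> //.
by split; [apply: map_subseq | move/(inj_map m_inj)].
Qed.

Definition extensions (H : family) (P : seq nat) (t : nat) : family :=
  fun F => all (fun x => t < x)%N F /\ H (P ++ F).

Lemma hered_family_extensions H P t : hered_family H -> hered_family (extensions H P t).
Proof.
case=> Hset Hher; split=> [F [_ /Hset /cat_sorted2 []]//|F F' [tF HPF] F'set F'F].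
have PF'F : subseq (P ++ F') (P ++ F) by apply: cat_subseq (subseq_refl P) F'F.
split; first by apply/allP => x /(mem_subseq F'F); apply/allP.
exact: Hher HPF (subseq_sorted ltn_trans PF'F (Hset _ HPF)) PF'F.
Qed.

Lemma CB_deriv_extensions H P t a F :
  CB_deriv (extensions H P t) a F -> CB_deriv H a (P ++ F).
Proof.
elim: a F => [|a IH|f IH] F /=; [by case | | by move=> HF n; apply: IH].
move=> [/IH HPF [F' [/IH HPF' [FF' FneF']]]]; split=> //.
exists (P ++ F'); split=> //; split; first exact: cat_subseq (subseq_refl P) FF'.
by move/eqP; rewrite eqseq_cat // eqxx => /eqP.
Qed.

Definition CB_layer (F : family) (z : ord) (k : nat) : family :=
  CB_deriv F (ord_mul (ord_exp ord_omega z) (ord_of_nat k)).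

Lemma CB_layerS F z k : CB_layer F z k.+1 = CB_deriv (CB_layer F z k) (ord_exp ord_omega z).
Proof. exact: CB_deriv_add. Qed.

Lemma CB_layer_antitone F z k l E : (k <= l)%N -> CB_layer F z l E -> CB_layer F z k E.
Proof. by move=> kl; apply/CB_deriv_antitone/ord_mul_monor/ord_of_nat_le. Qed.

(** * Eventual monotonicity of the Schreier families *)

Section SchreierMonotone.
Variables (sq : ord -> nat -> ord) (S : ord -> family).
Hypothesis HS : Schreier_system sq S.

Lemma S_succ_of a E : is_set E -> E <> [::] -> S a E -> S (OS a) E.
Proof.
case: HS => _ _ Ssucc _ Eset En0 SaE; apply/Ssucc; right; split=> //.
exists [:: E]; split=> //=; first by rewrite cats0.
- by move=> A; rewrite inE => /eqP ->.
- by split; [rewrite /is_set | right].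
Qed.

Lemma S_eventually_mono a b : ord_le a b -> exists N, forall E,
  is_set E -> E <> [::] -> (N <= head 0 E)%N -> S a E -> S b E.
Proof.
case: HS => Seq _ _ Slim.
elim/(well_founded_ind ord_lt_wf): b a => b IH a ab.
have [ba|ab'] := ord_leVgt b a; first by exists 0%N => E _ _ _; apply: (Seq a b (conj ab ba) E).1.
case: (ord_zero_succ_or_limit b) => [[b0 _]|[[c [bc cb]]|blim]].
- by case: (@ord_lt0 a); apply: ord_lt_le_trans ab' b0.
- have [N HN] := IH c cb a (ord_leS2 (ord_le_trans ab' bc)).
  exists N => E Eset En0 NE SaE; apply: (Seq (OS c) b (conj cb bc) E).1.
  by apply: S_succ_of => //; apply: HN.
- have [sq_lt [sq_le sq_ge] sq_chain Sb] := Slim b blim.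
  have [n an] : exists n, ord_lt a (sq b n) by apply: ord_ltLr; apply: ord_lt_le_trans ab' sq_ge.
  have sqn_b : ord_lt (sq b n) b.
    apply: (ord_lt_le_trans (sq_lt n)); apply: ord_le_trans sq_le.
    exact: (@ord_leLr _ _ n.+1) (ord_le_refl _).
  have [N HN] := IH _ sqn_b a (ord_ltW an).
  have up m E : is_set E -> E <> [::] -> (n <= m)%N -> S (sq b n) E -> S (OS (sq b m)) E.
    move=> Eset En0; elim: m => [|m IHm]; first by rewrite leqn0 => /eqP <-; apply: S_succ_of.
    rewrite leq_eqVlt => /orP [/eqP <-|nm]; first exact: S_succ_of.
    by move=> /(IHm nm) /sq_chain; apply: S_succ_of.
  exists (maxn N n) => E Eset En0; rewrite geq_max => /andP [NE nE] SaE.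
  by apply/Sb; right; split=> //; apply: up => //; apply: HN.
Qed.

End SchreierMonotone.

Lemma sorted_ltn_subseq (s t : seq nat) :
  sorted ltn s -> sorted ltn t -> {subset s <= t} -> subseq s t.
Proof.
move=> ss st sub; suff -> : s = [seq x <- t | x \in s] by apply: filter_subseq.
apply: (irr_sorted_eq ltn_trans ltnn ss (sorted_filter ltn_trans _ st)) => x.
by rewrite mem_filter; case xs: (x \in s) => //=; rewrite sub.
Qed.

Fixpoint subseqs (T : Type) (s : seq T) : seq (seq T) :=
  if s is x :: s' then [seq x :: P | P <- subseqs s'] ++ subseqs s' else [:: [::]].

Lemma mem_subseqs (T : eqType) (P s : seq T) : subseq P s -> P \in subseqs s.
Proof.
elim: s P => [|x s IH] P; first by case: P => //= _; rewrite mem_seq1.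
case: P => [|y P] /=; first by rewrite mem_cat IH ?orbT // sub0seq.
rewrite mem_cat; case: eqP => [-> /IH Ps|_ /IH Ps]; last by rewrite Ps orbT.
by rewrite (map_f (cons x) Ps).
Qed.

Lemma head_mem (T : eqType) (x0 : T) s : s <> [::] -> head x0 s \in s.
Proof. by case: s => // x s _; apply: mem_head. Qed.

Lemma sorted_ltn_mem_bounds (s : seq nat) x :
  sorted ltn s -> x \in s -> (head 0 s <= x <= last 0 s)%N.
Proof.
case: s => [|a s] //= sS; rewrite inE => /orP [/eqP ->|xs].
- rewrite leqnn /=; elim: s a sS => [|b s IH] a //= /andP [ab pb].
  exact: leq_trans (ltnW ab) (IH _ pb).
- have /allP /(_ x xs) ax := order_path_min ltn_trans sS; rewrite (ltnW ax) /=.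
  elim: s a sS xs {ax} => [|b s IH] a //= /andP [ab pb]; rewrite inE => /orP [/eqP ->|xs].
  + elim: s b pb {ab IH} => [|c s IH] b //= /andP [bc pc].
    exact: leq_trans (ltnW bc) (IH _ pc).
  + exact: IH.
Qed.

Lemma filter_le_cat (E : seq nat) t t' : sorted ltn E -> (t <= t')%N ->
  [seq x <- E | (x <= t)%N] ++ [seq x <- E | (t < x <= t')%N] = [seq x <- E | (x <= t')%N].
Proof.
elim: E => [|x E IH] //= sE tt'.
have /allP xE := order_path_min ltn_trans sE.
have {}IH := IH (path_sorted sE) tt'.
have [xt|tx] /= := leqP x t; first by rewrite (leq_trans xt tt') /= IH.
have -> : [seq y <- E | (y <= t)%N] = [::].
  apply/eqP; rewrite -(negbK (_ == _)) -has_filter; apply/hasPn => y /xE xy.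
  by rewrite -ltnNge (ltn_trans tx xy).
by case: (x <= t')%N; [congr cons|]; apply: eq_in_filter => y /xE xy; rewrite (ltn_trans tx xy).
Qed.

Lemma sorted_ltn_cat (A B : seq nat) :
  sorted ltn A -> sorted ltn B -> (last 0 A < head 0 B)%N -> sorted ltn (A ++ B).
Proof.
case: A => [|a A] /=; first by move=> _ sB _.
case: B => [|b B] //= sA sB ab.
by rewrite cat_path sA /= ab.
Qed.

Lemma sorted_flatten (g : nat -> seq nat) :
  (forall i, sorted ltn (g i)) -> (forall i, g i <> [::]) ->
  (forall i, last 0 (g i) < head 0 (g i.+1))%N ->
  forall a n, sorted ltn (flatten [seq g i | i <- iota a n]).
Proof.
move=> gset gn0 gchain a n; elim: n a => [|n IH] a //=.
case: n IH => [|n] IH; first by rewrite cats0.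
apply: sorted_ltn_cat; [exact: gset | exact: IH |] => /=.
by case: (g a.+1) (gn0 a.+1) (gchain a).
Qed.

(** * Small averages *)

Lemma common_witness (I : eqType) (T : Type) (le : T -> T -> Prop) (x0 : T)
    (Q : I -> T -> Prop) (s : seq I) :
  (forall x y, le x y \/ le y x) -> (forall i x y, le x y -> Q i x -> Q i y) ->
  {in s, forall i, exists x, Q i x} -> exists x, {in s, forall i, Q i x}.
Proof.
move=> le_total Qmono; elim: s => [|i s IH] Qs; first by exists x0.
have [x Qix] := Qs i (mem_head i s).
have [y Qsy] := IH (fun j js => Qs j (mem_behead (s := i :: s) js)).
have [xy|yx] := le_total x y.
- by exists y => j; rewrite inE => /orP [/eqP ->|/Qsy]; [apply: Qmono Qix|].
- by exists x => j; rewrite inE => /orP [/eqP ->|/Qsy/Qmono]; [|apply].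
Qed.

Lemma count_heavy_le (D : nat -> family) (P : nat -> seq nat) (heavy : pred nat) K :
  (forall k j, D k (P j.+1) -> D k (P j)) ->
  (forall k j, (k <= K)%N -> heavy j -> ~ D k.+1 (P j) -> ~ D k (P j.+1)) ->
  (forall j, D 0%N (P j)) ->
  forall m j k, (k <= K)%N -> ~ D k.+1 (P j) -> (count heavy (iota j m) <= k)%N.
Proof.
move=> Dprefix Dheavy D0; elim=> [|m IHm] j k // kK nDj /=.
case: (boolP (heavy j)) => [hj|_]; last by apply: IHm kK _ => /Dprefix.
case: k kK nDj => [|k] kK nDj; first by case: (Dheavy 0%N j kK hj nDj (D0 j.+1)).
by rewrite add1n ltnS; apply: IHm (ltnW kK) (Dheavy _ _ kK hj nDj).
Qed.

Section SmallAverages.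
Variable R : realType.
Implicit Types (L : seq (nat * R)) (B : nat -> seq (nat * R)) (X : family).

Definition mass L (E : seq nat) : R := \sum_(p <- L | p.1 \in E) p.2.

(* [L] lists the atoms [(k, weight)] of a probability measure. *)
Definition prob_on X (N0 : nat) L : Prop :=
  [/\ X (unzip1 L), is_set (unzip1 L), (N0 <= head 0 (unzip1 L))%N,
      all (fun p => 0 <= p.2) L & \sum_(p <- L) p.2 = 1].

Lemma prob_on_neq0 X N0 L : prob_on X N0 L -> unzip1 L <> [::].
Proof. by case=> _ _ _ _; case: L => //; rewrite big_nil => /eqP; rewrite eq_sym oner_eq0. Qed.

Lemma mass_ge0 L E : all (fun p => 0 <= p.2) L -> 0 <= mass L E.
Proof. by move=> /allP L0; rewrite /mass big_seq_cond sumr_ge0 // => p /andP [/L0]. Qed.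

Lemma mass_le1 X N0 L E : prob_on X N0 L -> mass L E <= 1.
Proof.
case=> _ _ _ /allP L0 <-; rewrite /mass [X in _ <= X](bigID (fun p => p.1 \in E)) /=.
by rewrite lerDl big_seq_cond sumr_ge0 // => p /andP [/L0].
Qed.

Definition small_averages (S : ord -> family) (eta : ord) : Prop :=
  forall (I : eqType) (s : seq I) (G : I -> family),
    {in s, forall i, hered_family (G i)} ->
    {in s, forall i E, ~ CB_deriv (G i) (ord_exp ord_omega eta) E} ->
    forall (delta : R) (N0 : nat), 0 < delta ->
    exists L, prob_on (S eta) N0 L /\ {in s, forall i E, G i E -> mass L E <= delta}.

Lemma mass_filter L E (a : pred nat) :
  {in unzip1 L, forall x, a x} -> mass L [seq x <- E | a x] = mass L E.
Proof.
move=> La; rewrite /mass big_seq_cond [RHS]big_seq_cond; apply: eq_bigl => p.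
case pL: (p \in L) => //=.
by rewrite mem_filter La // (map_f fst pL).
Qed.

Definition average (N : nat) B : seq (nat * R) :=
  flatten [seq [seq (p.1, p.2 / N%:R) | p <- B j] | j <- iota 0 N].

Lemma unzip1_average N B :
  unzip1 (average N B) = flatten [seq unzip1 (B j) | j <- iota 0 N].
Proof.
rewrite /average /unzip1 map_flatten -map_comp; congr flatten.
by apply: eq_map => j /=; rewrite -map_comp.
Qed.

Lemma mass_average N B E :
  mass (average N B) E = (\sum_(j <- iota 0 N) mass (B j) E) / N%:R.
Proof.
rewrite /mass big_flatten big_map mulr_suml; apply: eq_bigr => j _.
by rewrite big_map -mulr_suml.
Qed.

Lemma average_le_of_few_heavy (f : nat -> R) (d : R) (N K : nat) :
  (0 < N)%N -> 0 <= d -> (forall j, 0 <= f j <= 1) ->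
  (count (fun j => (d < f j)%R) (iota 0 N) <= K)%N -> K%:R <= N%:R * d ->
  (\sum_(j <- iota 0 N) f j) / N%:R <= d * 2.
Proof.
move=> N0 d0 f01 cnt KN.
have sum_le s : \sum_(j <- s) f j <= (count (fun j => d < f j) s)%:R + (size s)%:R * d.
  elim: s => [|j s IHs] /=; first by rewrite big_nil mul0r addr0.
  rewrite big_cons -addn1 natrD; have /andP [fj0 fj1] := f01 j.
  by case: ltrP => fj /=; rewrite ?natrD; lra.
rewrite ler_pdivrMr ?ltr0n //; apply: le_trans (sum_le _) _.
have : (count (fun j => d < f j) (iota 0 N))%:R <= K%:R :> R by rewrite ler_nat.
by rewrite size_iota; lra.
Qed.

Variables (sq : ord -> nat -> ord) (S : ord -> family).
Hypothesis HS : Schreier_system sq S.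

Lemma prob_on_average z N N0 B :
  (0 < N)%N -> (forall j, prob_on (S z) 0 (B j)) ->
  (forall j, last 0 (unzip1 (B j)) < head 0 (unzip1 (B j.+1)))%N ->
  (maxn N0 N <= head 0 (unzip1 (B 0)))%N ->
  prob_on (S (OS z)) N0 (average N B).
Proof.
move=> N_gt0 Bprob Bchain; rewrite geq_max => /andP [N0B NB].
pose g j := unzip1 (B j).
have gset j : sorted ltn (g j) by case: (Bprob j).
have gn0 j : g j <> [::] := prob_on_neq0 (Bprob j).
have head_flat : head 0 (flatten [seq g j | j <- iota 0 N]) = head 0 (g 0).
  by case: N N_gt0 NB => // n _ _ /=; case: (g 0) (gn0 0).
have heads_set : sorted ltn [seq head 0 (g j) | j <- iota 0 N].
  rewrite sorted_map; apply: sub_sorted (iota_ltn_sorted 0 N) => i j /=.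
  apply: (homo_ltn (f := fun j => head 0 (g j)) ltn_trans) => k.
  have /andP [_ hl] := sorted_ltn_mem_bounds (gset k) (head_mem 0%N (gn0 k)).
  exact: leq_ltn_trans hl (Bchain k).
split; rewrite ?unzip1_average ?head_flat //.
- case: HS => _ _ Ssucc _; apply/Ssucc; right; split; first exact: sorted_flatten.
  exists [seq g j | j <- iota 0 N]; split=> //.
  + by case: N N_gt0 {NB head_flat heads_set}.
  + by move=> A /mapP [j _ ->]; split; [apply: gn0 | case: (Bprob j) => SB *].
  + move=> j; rewrite size_map size_iota => jN.
    have jN' := ltnW jN.
    by rewrite !(nth_map 0%N) ?size_iota ?nth_iota // add0n; apply: Bchain.
  + split; first by rewrite /is_set -map_comp.
    right; rewrite -map_comp size_map size_iota.
    by case: N N_gt0 NB {head_flat heads_set} => //= n _ /ltnW.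
- exact: sorted_flatten.
- apply/allP => p /flattenP [ps /mapP [j _ ->] /mapP [q qB ->]] /=.
  by case: (Bprob j) => _ _ _ /allP /(_ q qB) q0 _; rewrite divr_ge0.
- rewrite big_flatten big_map (eq_bigr (fun=> N%:R^-1)) => [|j _]; last first.
    by case: (Bprob j) => _ _ _ _ B1; rewrite big_map -mulr_suml B1 mul1r.
  rewrite -{1}(subn0 N) -/(index_iota 0 N) sumr_const_nat subn0.
  rewrite -[N%:R^-1 *+ N]mulr_natr mulVf //.
  by rewrite pnatr_eq0 -lt0n.
Qed.

Lemma small_averages_zero : small_averages S OZ.
Proof.
move=> I s G Gh Gcb delta N0 delta0; exists [:: (N0, 1)]; split.
  split=> //=; last by rewrite big_seq1.
  - by case: HS => _ S0E _ _; apply/S0E.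
  - by rewrite ler01.
move=> i si E GE; suff -> : E = [::] by rewrite /mass big_pred0 ?ltW // => p; rewrite in_nil.
case: E GE => // n E GE; case: (Gcb i si [::]); split.
  exact: hered_family_nil (Gh i si) GE.
by exists (n :: E); do 2 split=> //; apply: sub0seq.
Qed.

Lemma small_averages_OL f :
  (forall n, small_averages S (f n)) -> small_averages S (OL f).
Proof.
move=> IH I s G Gh Gcb delta N0 delta0.
have [n Gn] : exists n, {in s, forall i E, ~ CB_deriv (G i) (ord_exp ord_omega (f n)) E}.
  apply: (@common_witness _ _ (fun x y => ord_le (f x) (f y)) 0%N
    (fun i n => forall E, ~ CB_deriv (G i) (ord_exp ord_omega (f n)) E)).
  - by move=> x y; case: (ord_leVgt (f x) (f y)) => [|/ord_ltW]; [left|right].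
  - move=> i x y xy Gx E /(CB_deriv_antitone (ord_exp_monor ord_omega_ge1 xy)).
    exact: Gx.
  - by move=> i si; apply: CB_deriv_OL_empty (Gh i si) (Gcb i si).
have [N HN] := S_eventually_mono HS (@ord_leLr (f n) f n (ord_le_refl _)).
have [L [[SL Lset N0L L0 L1] Lsmall]] := IH n I s G Gh Gn delta (maxn N0 N) delta0.
exists L; split=> //; move: N0L; rewrite geq_max => /andP [N0L NL]; split=> //.
by apply: HN => //; apply: prob_on_neq0 (And5 SL Lset N0L L0 L1).
Qed.

Section Blocks.
Variables (I : eqType) (s : seq I) (G : I -> family) (z : ord) (K : nat) (d : R).
Hypothesis Gh : {in s, forall i, hered_family (G i)}.

Definition small_on_extensions (t : nat) L : Prop :=
  forall i k P F, i \in s -> (k <= K)%N -> subseq P (iota 0 t.+1) ->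
    ~ CB_layer (G i) z k.+1 P -> extensions (CB_layer (G i) z k) P t F -> mass L F <= d.

Lemma extension_small_blocks : small_averages S z -> 0 < d ->
  exists B, forall t, prob_on (S z) t.+1 (B t) /\ small_on_extensions t (B t).
Proof.
move=> IH d0.
suff block t : exists L, prob_on (S z) t.+1 L /\ small_on_extensions t L.
  by have [B HB] := choice block; exists B.
pose X (x : I * nat * seq nat) := extensions (CB_layer (G x.1.1) z x.1.2) x.2 t.
pose s' := [seq x <- [seq (ik, P) | ik <- [seq (i, k) | i <- s, k <- iota 0 K.+1],
                                   P <- subseqs (iota 0 t.+1)]
           | ~~ `[< CB_layer (G x.1.1) z x.1.2.+1 x.2 >]].
have s'P x : x \in s' -> x.1.1 \in s /\ ~ CB_layer (G x.1.1) z x.1.2.+1 x.2.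
  rewrite mem_filter => /andP [/asboolPn nD xs]; split=> //.
  by move: xs => /allpairsP [[ik P] [/allpairsP [[i k] [si _ ->]] _ ->]].
have Xh : {in s', forall x, hered_family (X x)}.
  by move=> x /s'P [si _]; apply/hered_family_extensions/hered_family_CB_deriv/Gh.
have Xcb : {in s', forall x F, ~ CB_deriv (X x) (ord_exp ord_omega z) F}.
  move=> x /s'P [si nD] F /CB_deriv_extensions; rewrite -CB_layerS => DPF; apply: nD.
  exact: hered_family_prefix (hered_family_CB_deriv _ (Gh si)) DPF.
have [L [Lprob Lsmall]] := IH _ s' X Xh Xcb d t.+1 d0.
exists L; split=> // i k P F si kK Psub nD XF; apply: (Lsmall ((i, k), P)) => //.
rewrite mem_filter; apply/andP; split; first exact/asboolPn.
apply/allpairsP; exists ((i, k), P); split=> //; last exact: mem_subseqs.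
by apply/allpairsP; exists (i, k); split=> //; rewrite mem_iota ltnS.
Qed.

(* The heart of the successor step: along the initial segments of [E], a heavy
   block forces a descent to a lower layer, so at most [K] blocks are heavy. *)
Lemma few_heavy_blocks (X : family) B (T : nat -> nat) :
  (forall t, prob_on X t.+1 (B t) /\ small_on_extensions t (B t)) ->
  (forall j, T j.+1 = last 0 (unzip1 (B (T j)))) ->
  {in s, forall i E, ~ CB_layer (G i) z K E} ->
  {in s, forall i E, G i E -> forall n,
     (count (fun j => (d < mass (B (T j)) E)%R) (iota 0 n) <= K)%N}.
Proof.
move=> HB T_S HK i si E GE n.
have [Gset Gher] := Gh si; have Eset := Gset E GE.
have keys j x : x \in unzip1 (B (T j)) -> (T j < x <= T j.+1)%N.
  have [[_ Bset hB _ _] _] := HB (T j) => xB.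
  have /andP [h l] := sorted_ltn_mem_bounds Bset xB.
  by rewrite T_S (leq_trans hB h) l.
have T_lt j : (T j < T j.+1)%N.
  have [Bprob _] := HB (T j).
  by have /andP [] := keys j _ (head_mem 0%N (prob_on_neq0 Bprob)); apply: leq_trans.
pose P j := [seq x <- E | (x <= T j)%N].
pose seg j := [seq x <- E | (T j < x <= T j.+1)%N].
have P_S j : P j.+1 = P j ++ seg j by rewrite filter_le_cat // ltnW.
have Pset j : is_set (P j) := sorted_filter ltn_trans _ Eset.
apply: (count_heavy_le (D := CB_layer (G i) z) (P := P)) (leqnn K) _.
- move=> k j; rewrite P_S; exact: hered_family_prefix (hered_family_CB_deriv _ (Gh si)).
- move=> k j kK heavy nD DP; move: heavy; rewrite ltNge -(mass_filter _ (keys j)) => /negP; apply.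
  have [_ small] := HB (T j); apply: small si kK _ nD _.
    apply: sorted_ltn_subseq (Pset j) (iota_ltn_sorted 0 _) _ => x.
    by rewrite mem_filter mem_iota ltnS => /andP [].
  by split; [apply/allP => x; rewrite mem_filter => /andP [/andP []] | rewrite -P_S].
- by move=> j; apply: Gher GE (Pset j) (filter_subseq _ _).
- by rewrite CB_layerS => /CB_deriv_sub; apply: HK.
Qed.

End Blocks.

Lemma small_averages_succ z : small_averages S z -> small_averages S (OS z).
Proof.
move=> IH I s G Gh Gcb delta N0 delta0.
have [K HK] : exists K, {in s, forall i E, ~ CB_layer (G i) z K E}.
  apply: (@common_witness _ _ leq 0%N (fun i K => forall E, ~ CB_layer (G i) z K E)).
  - by move=> x y; apply/orP/leq_total.
  - by move=> i x y xy Gx E /(CB_layer_antitone xy); apply: Gx.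
  - by move=> i si; apply: CB_deriv_OL_empty (Gh i si) (Gcb i si).
pose d := delta / 2; have d0 : 0 < d by rewrite divr_gt0.
have [N [N_gt0 KN]] : exists N, (0 < N)%N /\ K%:R <= N%:R * d.
  exists (Num.bound (K%:R / d)).+1; split=> //; rewrite -ler_pdivrMr //.
  apply/ltW/(lt_le_trans (archi_boundP _)); first by rewrite divr_ge0 // ltW.
  by rewrite ler_nat.
have [B HB] := extension_small_blocks K Gh IH d0.
pose T j := iter j (fun t => last 0 (unzip1 (B t))) (maxn N0 N).
exists (average N (fun j => B (T j))); split.
- apply: prob_on_average => // [j|j|].
  + by have [[? ? _ ? ?] _] := HB (T j); split.
  + by have [[_ _ h _ _] _] := HB (T j.+1).
  + by have [[_ _ h _ _] _] := HB (T 0); apply: leq_trans h.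
- move=> i si E GE; rewrite mass_average (_ : delta = d * 2); last by rewrite divfK.
  apply: average_le_of_few_heavy (ltW d0) _ _ KN => // [j|].
  + have [Bprob _] := HB (T j); rewrite (mass_le1 _ Bprob) andbT.
    by case: Bprob => _ _ _ B0 _; apply: mass_ge0.
  + exact: (few_heavy_blocks (T := T) Gh HB (fun j => erefl) HK si GE N).
Qed.

Lemma small_averages_all eta : small_averages S eta.
Proof.
elim: eta => [|z|f]; first exact: small_averages_zero.
- exact: small_averages_succ.
- exact: small_averages_OL.
Qed.

End SmallAverages.

(** * Convex combinations of the basis in [Z0] *)

Local Open Scope classical_set_scope.

Section CombinationsOfBasis.
Variable R : realType.
Implicit Types (L : seq (nat * R)).

Lemma sum_basis_vec (E : seq nat) n : uniq E -> \sum_(i <- E) basis_vec R n i = (n \in E)%:R.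
Proof.
elim: E => [|x E IH] /=; first by rewrite big_nil.
case/andP => xE uE; rewrite big_cons IH // inE /basis_vec.
have [xn|_] := eqVneq x n; last by rewrite add0r.
by subst x; rewrite (negbTE xE) addr0.
Qed.

Definition weight L (k : nat) : R := \sum_(p <- L | p.1 == k) p.2.

Lemma sum_weight L (g : nat -> R) : uniq (unzip1 L) ->
  \sum_(k <- unzip1 L) weight L k * g k = \sum_(p <- L) p.2 * g p.1.
Proof.
rewrite /unzip1 /weight; elim: L => [|[x c] L IH] /=; first by rewrite !big_nil.
case/andP => xL uL; rewrite !big_cons /= ?eqxx.
have -> : \sum_(p <- L | p.1 == x) p.2 = 0.
  rewrite big_seq_cond big1 // => p /andP [pL /eqP px].
  by move: xL; rewrite -px (map_f fst pL).
rewrite addr0 -IH //; congr (_ + _).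
rewrite [LHS]big_seq [RHS]big_seq; apply: eq_bigr => k kL.
rewrite big_cons /=; case: (eqVneq x k) => [xk|] //.
by move: xL; rewrite xk kL.
Qed.

Lemma co_weights (xs : nat -> nat -> R) X N0 L : prob_on X N0 L ->
  co xs (unzip1 L) (fun i => \sum_(k <- unzip1 L) weight L k * xs k i).
Proof.
case=> _ Lset _ /allP L0 L1; exists (weight L); split=> //.
- by move=> k _; rewrite /weight big_seq_cond sumr_ge0 // => p /andP [/L0].
rewrite -L1 -(eq_bigr _ (fun k _ => mulr1 (weight L k))) sum_weight.
  by apply: eq_bigr => p _; rewrite mulr1.
exact: (sorted_uniq ltn_trans ltnn Lset).
Qed.

Lemma l1_norm_combination (m : nat -> nat) L (E : seq nat) :
  uniq E -> uniq (unzip1 L) -> all (fun p => 0 <= p.2) L ->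
  \sum_(i <- E) `|\sum_(k <- unzip1 L) weight L k * basis_vec R (m k) i|
    = mass L [seq k <- unzip1 L | m k \in E].
Proof.
move=> Euniq Luniq /allP L0.
have y0 i : 0 <= \sum_(k <- unzip1 L) weight L k * basis_vec R (m k) i.
  rewrite sum_weight // big_seq sumr_ge0 // => p /L0 p0.
  by rewrite mulr_ge0 // /basis_vec; case: ifP.
under eq_bigr => i _ do rewrite ger0_norm // sum_weight //.
rewrite exchange_big /mass [RHS]big_mkcond big_seq [RHS]big_seq; apply: eq_bigr => p pL.
rewrite -mulr_sumr sum_basis_vec // mem_filter (map_f fst pL) andbT.
by case: (m p.1 \in E); rewrite ?mulr1 ?mulr0.
Qed.
End CombinationsOfBasis.

Section Z0.
Variables (R : realType) (w : nat -> R) (Fs : nat -> family).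
Hypotheses (Fs_reg : forall j, regular (Fs j)) (Fs_single : forall j n, Fs j [:: n]).
Hypotheses (w_pos : forall n, 0 < w n) (w_cvg : w @ \oo --> 0).

Lemma Z0norm_le (x : nat -> R) c :
  (forall j E, Fs j E -> w j * \sum_(i <- E) `|x i| <= c) -> Z0norm w Fs x <= c.
Proof.
move=> xc; apply: ge_sup => [|r [j [E [FE ->]]]]; last exact: xc.
by exists (w 0%N * \sum_(i <- [:: 0%N]) `|x i|), 0%N, [:: 0%N].
Qed.

Lemma Z0norm_ge0 (x : nat -> R) : 0 <= Z0norm w Fs x.
Proof.
rewrite /Z0norm; set A := [set r | _]; have [[_ Aub]|] := EM (has_sup A); last by move/sup_out ->.
have A0 : A (w 0%N * \sum_(i <- [:: 0%N]) `|x i|) by exists 0%N, [:: 0%N].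
apply: le_trans (_ : 0 <= w 0%N * \sum_(i <- [:: 0%N]) `|x i|) _.
  by rewrite mulr_ge0 ?sumr_ge0 // ltW.
exact: ub_le_sup.
Qed.

Lemma w_bounded : exists2 M, 0 < M & forall j, w j <= M.
Proof.
have w_cvgn : cvgn w by apply/cvg_ex; exists 0.
have [M0 [_ HM]] := cvg_seq_bounded w_cvgn.
have wM j : w j <= M0 + 1.
  by apply: le_trans (ler_norm _) (HM _ _ j Logic.I); rewrite ltrDl.
by exists (M0 + 1) => //; apply: lt_le_trans (w_pos 0) (wM 0%N).
Qed.

Lemma basis_vec_bounded : bounded_seq (Z0norm w Fs) (@basis_vec R).
Proof.
have [M _ wM] := w_bounded; exists M => n; apply: Z0norm_le => j E FE.
have Euniq : uniq E.
  by case: (Fs_reg j) => Fset _ _ _; apply: (sorted_uniq ltn_trans ltnn (Fset _ FE)).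
have b0 i : 0 <= basis_vec R n i by rewrite /basis_vec; case: ifP.
under eq_bigr => i _ do rewrite (ger0_norm (b0 i)).
rewrite sum_basis_vec //; apply: le_trans (wM j).
by case: (n \in E) => /=; [rewrite mulr1 | rewrite mulr0 ltW].
Qed.


Lemma Z0norm_small_combination (m : nat -> nat) (eps M : R) J L X N0 :
  {homo m : i j / (i < j)%N} -> 0 < M -> (forall j, w j <= M) ->
  (forall j, (J <= j)%N -> w j <= eps) -> prob_on X N0 L ->
  {in iota 0 J, forall j K, pullback m (Fs j) K -> mass L K <= eps / M} ->
  Z0norm w Fs (fun i => \sum_(k <- unzip1 L) weight L k * basis_vec R (m k) i) <= eps.
Proof.
move=> m_lt M0 wM wJ Lprob Lsmall; apply: Z0norm_le => j E FE.
have [_ Lset _ L0 _] := Lprob; have [Fset Fher _ _] := Fs_reg j; have Eset := Fset _ FE.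
rewrite l1_norm_combination ?(sorted_uniq ltn_trans ltnn) //.
set K := [seq k <- unzip1 L | m k \in E].
have mass0 := mass_ge0 K L0; have w0 := ltW (w_pos j).
have [Jj|jJ] := leqP J j.
  by apply: le_trans (wJ j Jj); rewrite ler_piMr // (mass_le1 _ Lprob).
have Kset : is_set K := sorted_filter ltn_trans _ Lset.
have mKset : is_set (map m K) by rewrite /is_set sorted_map; apply: sub_sorted Kset => a b /m_lt.
have K_pull : pullback m (Fs j) K.
  split=> //; apply: (Fher _ _ FE mKset); apply: sorted_ltn_subseq mKset Eset _.
  by move=> x /mapP [k]; rewrite mem_filter => /andP [mkE _] ->.
have KM : mass L K <= eps / M by apply: Lsmall K_pull; rewrite mem_iota.
by apply: le_trans (ler_pM w0 mass0 (wM j) KM) _; rewrite mulrC divfK ?gt_eqF.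
Qed.

Variables (sq : ord -> nat -> ord) (S : ord -> family).
Hypothesis HS : Schreier_system sq S.

(* Only the finitely many [j] with [w j > eps] need small averages, on the
   families [Fs j] pulled back along the subsequence. *)
Lemma basis_not_l1_spreading_model eta (m : nat -> nat) :
  (forall j, CB_lt (Fs j) (ord_exp ord_omega eta)) -> (forall k, (m k < m k.+1)%N) ->
  ~ l1_spreading_model (Z0norm w Fs) (fun k => basis_vec R (m k)) (S eta).
Proof.
move=> Fs_cb m_inc; rewrite /l1_spreading_model; set A := [set r | _] => A_gt0.
have m_lt : {homo m : i j / (i < j)%N} := homo_ltn ltn_trans m_inc.
have [M M0 wM] := w_bounded.
pose eps := inf A / 2; have eps0 : 0 < eps by rewrite divr_gt0.
have [J _ wJ] := cvgr0_norm_le _ w_cvg _ eps0.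
have wJ' j : (J <= j)%N -> w j <= eps by move/wJ; apply: le_trans (ler_norm _).
pose G j := pullback m (Fs j).
have Gh : {in iota 0 J, forall j, hered_family (G j)}.
  by move=> j _; case: (Fs_reg j) => _ Fher _ _; apply: hered_family_pullback.
have Gcb : {in iota 0 J, forall j K, ~ CB_deriv (G j) (ord_exp ord_omega eta) K}.
  move=> j _ K /(CB_deriv_pullback (incn_inj (leq_mono m_lt))) FK.
  have [b [b_lt Fb]] := Fs_cb j; exact: Fb _ (CB_deriv_antitone (ord_ltW b_lt) FK).
have [L [Lprob Lsmall]] := small_averages_all HS Gh Gcb 0%N (divr_gt0 eps0 M0).
have yA : A (Z0norm w Fs (fun i => \sum_(k <- unzip1 L) weight L k * basis_vec R (m k) i)).
  by case: (Lprob) => SL _ _ _ _; do 2 eexists; split; [exact: SL | exact: co_weights Lprob |].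
have A_lb : has_lbound A by exists 0 => r [F [y [_ _ ->]]]; apply: Z0norm_ge0.
have := le_trans (ge_inf A_lb yA) (Z0norm_small_combination m_lt M0 wM wJ' Lprob Lsmall).
by rewrite /eps; lra.
Qed.

End Z0.

Theorem proposition3p7 (R : realType) (sq : ord -> nat -> ord)
  (S : ord -> seq nat -> Prop) (eta : ord) (Fs : nat -> seq nat -> Prop)
  (w : nat -> R) :
  Schreier_system sq S ->
  ord_lt OZ eta ->
  (forall j, regular (Fs j)) ->
  (forall j n, Fs j [:: n]) ->
  (forall j, CB_lt (Fs j) (ord_exp ord_omega eta)) ->
  (forall n, 0 < w n) ->
  w @ \oo --> 0 ->
  weakly_null_wrt (Z0norm w Fs) (@basis_vec R) (S eta).
Proof.
move=> HS _ Fs_reg Fs_single Fs_cb w_pos w_cvg; split.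
  exact: (basis_vec_bounded Fs_reg Fs_single w_pos w_cvg).
move=> m m_inc; exact: (basis_not_l1_spreading_model Fs_reg Fs_single w_pos w_cvg HS Fs_cb m_inc).
Qed.
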